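(* Let $q\in(0,1)$ and let $\tau$ be a GW tree with offspring distribution $p(0)=1-q$, $p(k)=q^2(1-q)^{k-1}$ for $k\ge1$ (which is critical). Let $(\alpha_n,n\in\mathbb N)$ be a sequence of positive integers with $\lim_{n\to\infty}\alpha_n/n^2=0$. Then the conditional law of $\tau$ given $\{\mathcal G_n(\tau)=\alpha_n\}$ converges in distribution to the law of Kesten's tree $\tau^*$ as $n\to\infty$.
   Context: Trees (Neveu formalism): $\mathcal U=\bigcup_{n\ge0}(\mathbb N^* )^n$, $|u|$ the length of $u$. A tree is $\mathbf t\subset\mathcal U$ with $\emptyset\in\mathbf t$, closed under taking prefixes, and such that for every $u\in\mathbf t$ there is $k_u(\mathbf t)\ge0$ with $ui\in\mathbf t\iff1\le i\le k_u(\mathbf t)$. $\mathcal G_n(\mathbf t)=\mathrm{Card}\{u\in\mathbf t:|u|=n\}$. $r_h(\mathbf t)=\{u\in\mathbf t:|u|\le h\}$; convergence in distribution of random trees $T_n\to T$ means $\mathbb P(r_h(T_n)=\mathbf t)\to\mathbb P(r_h(T)=\mathbf t)$ for all $h$ and $\mathbf t$. A GW tree $\tau$ with offspring distribution $p$ satisfies $\mathbb P(r_h(\tau)=\mathbf t)=\prod_{u\in r_{h-1}(\mathbf t)}p(k_u(\mathbf t))$ for all $h\ge1$ and trees $\mathbf t$ of height $\le h$. Kesten's tree $\tau^*$ (for mean $\mu\le1$): with $p^*(n)=np(n)/\mu$, $\tau^*$ is a random tree with a random sequence $(V_k)_{k\ge1}$, $V_1\cdots V_h\in\tau^*$ for all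 $h$, constructed recursively: given $(V_1,\dots,V_h)$ and $r_h(\tau^* )$, the numbers of children of the vertices $v$ with $|v|=h$ are independent, with law $p$ if $v\ne V_1\cdots V_h$ and $p^*$ if $v=V_1\cdots V_h$; then $V_{h+1}$ is uniform on $\{1,\dots,k_{V_1\cdots V_h}(\tau^* )\}$. *)

From Stdlib Require Import Reals List ClassicalEpsilon.
Import ListNotations.
Open Scope R_scope.

(* This is the usual encoding of finite Neveu trees: the
   vertex u i is the i-th element of the children list of u, k_u = length. *)
Inductive ptree : Type := Node : list ptree -> ptree.

Fixpoint restr (h : nat) (t : ptree) : ptree :=
  match h, t with
  | O, _ => Node []
  | S h', Node l => Node (map (restr h') l)
  end.

Fixpoint gen (n : nat) (t : ptree) : nat :=
  match n, t with
  | O, _ => 1%nat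
  | S n', Node l => fold_right Nat.add 0%nat (map (gen n') l)
  end.

(* Sum of a family of (nonnegative) reals indexed by {x : T | P x}:
   the supremum of all finite sub-sums (classical choice of the lub). *)
Definition tsum_on {T : Type} (P : T -> Prop) (f : T -> R) : R :=
  epsilon (inhabits 0) (fun s =>
    is_lub (fun x => exists L : list T,
               NoDup L /\ Forall P L /\ x = fold_right Rplus 0 (map f L)) s).

Definition Rprod (l : list R) : R := fold_right Rmult 1 l.

(* P(r_h(tau) = t) for a GW tree tau with offspring distribution p:
   prod_{u in r_{h-1}(t)} p(k_u(t)) if t has height <= h, and 0 otherwise. *)
Fixpoint gw_law (p : nat -> R) (h : nat) (t : ptree) : R :=
  match h, t with
  | O, Node l => match l with [] => 1 | _ => 0 end
  | S h', Node l => p (length l) * Rprod (map (gw_law p h') l)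
  end.

Definition mean (p : nat -> R) : R := tsum_on (fun _ : nat => True) (fun k => INR k * p k).
Definition pstar (p : nat -> R) (k : nat) : R := INR k * p k / mean p.

Fixpoint spine_sum (ks gw : ptree -> R) (l : list ptree) : R :=
  match l with
  | [] => 0
  | c :: l' => ks c * Rprod (map gw l') + gw c * spine_sum ks gw l'
  end.

(* P(r_h(tau_star) = t) for Kesten's tree, obtained from the recursive
   construction: the spine vertex has law pstar, the next spine vertex is
   uniform among its k children (factor 1/k), the other vertices are
   independent GW(p); sum over the possible spine vertex V_1. *)
Fixpoint kesten_law (p : nat -> R) (h : nat) (t : ptree) : R :=
  match h, t with
  | O, Node l => match l with [] => 1 | _ => 0 end
  | S h', Node l =>
      pstar p (length l) / INR (length l) *
      spine_sum (kesten_law p h') (gw_law p h') l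
  end.

(* P(r_h(tau) = t | G_n(tau) = a): both events are determined by
   r_m(tau) with m = max n h, whose law is gw_law p m. *)
Definition gw_cond_law (p : nat -> R) (n a h : nat) (t : ptree) : R :=
  let m := Nat.max n h in
  tsum_on (fun s => restr h s = t /\ gen n s = a) (gw_law p m) /
  tsum_on (fun s => gen n s = a) (gw_law p m).

Definition geom_offspring (q : R) (k : nat) : R :=
  match k with
  | O => 1 - q
  | S k' => q ^ 2 * (1 - q) ^ k'
  end.

From Coquelicot Require Import Coquelicot.
From Stdlib Require Import Reals List ClassicalEpsilon Lra Lia.
From Stdlib Require FinFun.
Import ListNotations.
Open Scope R_scope.

(* The offspring law p(0) = 1-q, p(k) = q^2 (1-q)^(k-1) is the member lfrac(1-q)
   of the linear-fractional family lfrac z (mass z at 0, (1-z)^2 z^(b-1) at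
   b >= 1), which is closed under composition of generating functions.  Hence
   G_n has law lfrac(z_n) with z_n = n c / (1 + n c), c = (1-q)/q.  Given
   r_h(tau) = t, the generation n is the sum of G_h(t) independent copies of
   G_(n-h), so P(r_h = t, G_n = a) = P(r_h = t) times the G_h(t)-fold
   convolution power of lfrac(z_(n-h)) at a.
   A k-fold convolution power of lfrac z at a+1 is squeezed between k z^k and
   k (1 + a (1-z)^2/z)^k times (1-z)^2 z^a; when a = o(n^2) its ratio with
   lfrac(z_n)(a+1) therefore tends to k = G_h(t).  Finally, for a critical law
   P(r_h(tau_star) = t) = G_h(t) P(r_h(tau) = t), which is the limit. *)

(** * Sums of nonnegative families over arbitrary index sets *)

Definition lsum {T : Type} (f : T -> R) (L : list T) : R := fold_right Rplus 0 (map f L).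

Definition has_sum {T : Type} (P : T -> Prop) (f : T -> R) (s : R) : Prop :=
  is_lub (fun x => exists L : list T, NoDup L /\ Forall P L /\ x = lsum f L) s.

Definition nonneg {T : Type} (f : T -> R) : Prop := forall x, 0 <= f x.

Definition dec {T : Type} (x y : T) : {x = y} + {x <> y} :=
  excluded_middle_informative (x = y).

Lemma has_sum_tsum {T : Type} (P : T -> Prop) f s : has_sum P f s -> tsum_on P f = s.
Proof.
  intros H. unfold tsum_on.
  assert (Hx : exists x, has_sum P f x) by (exists s; exact H).
  exact (is_lub_u _ _ _ (epsilon_spec (inhabits 0) _ Hx) H).
Qed.

Lemma lsum_app {T : Type} (f : T -> R) L M : lsum f (L ++ M) = lsum f L + lsum f M.
Proof. unfold lsum; induction L; simpl; [ring | rewrite IHL; ring]. Qed.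

Lemma lsum_nonneg {T : Type} (f : T -> R) L : nonneg f -> 0 <= lsum f L.
Proof. intros Hf; unfold lsum; induction L; simpl; [lra | specialize (Hf a); lra]. Qed.

Lemma lsum_ext {T : Type} (f g : T -> R) L :
  (forall x, In x L -> f x = g x) -> lsum f L = lsum g L.
Proof.
  unfold lsum; induction L as [|x L IH]; intros H; simpl; auto.
  rewrite H by (left; auto). rewrite IH; auto. intros y Hy; apply H; right; auto.
Qed.

Lemma lsum_map {A B : Type} (f : B -> R) (g : A -> B) L :
  lsum f (map g L) = lsum (fun x => f (g x)) L.
Proof. unfold lsum; rewrite map_map; reflexivity. Qed.

Lemma lsum_scal {T : Type} (f : T -> R) c L : lsum (fun x => c * f x) L = c * lsum f L.
Proof. unfold lsum; induction L; simpl; [ring | rewrite IHL; ring]. Qed.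

Lemma lsum_prod {A B : Type} (f : A -> R) (g : B -> R) X Y :
  lsum (fun p => f (fst p) * g (snd p)) (list_prod X Y) = lsum f X * lsum g Y.
Proof.
  induction X as [|x X IH]; simpl; [unfold lsum; simpl; ring|].
  rewrite lsum_app, IH, lsum_map. simpl. rewrite lsum_scal. unfold lsum; simpl; ring.
Qed.

Lemma NoDup_remove_dec {T : Type} (x : T) M : NoDup M -> NoDup (remove dec x M).
Proof.
  induction M as [|y M IH]; intros Hn; simpl; auto. inversion Hn; subst.
  destruct (dec x y); auto. constructor; auto. intros Hin; apply in_remove in Hin; tauto.
Qed.

Lemma lsum_incl {T : Type} (f : T -> R) L M : nonneg f ->
  NoDup L -> NoDup M -> incl L M -> lsum f L <= lsum f M.
Proof.
  intros Hf. revert M. induction L as [|x L IH]; intros M HL HM Hi.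
  - apply lsum_nonneg; auto.
  - inversion HL; subst.
    assert (Hsplit : lsum f M = f x + lsum f (remove dec x M)).
    { assert (Hx : In x M) by (apply Hi; left; auto). clear -HM Hx.
      induction M as [|y M IHM]; [destruct Hx|]. inversion HM; subst. simpl.
      destruct (dec x y) as [<-|ne].
      - rewrite notin_remove by auto. reflexivity.
      - destruct Hx as [|Hx]; [congruence|]. unfold lsum in *; simpl; rewrite IHM; auto; ring. }
    rewrite Hsplit. unfold lsum at 1; simpl; fold (lsum f L).
    apply Rplus_le_compat_l, IH; auto.
    + apply NoDup_remove_dec; auto.
    + intros z Hz. apply in_in_remove; [intros ->; contradiction | apply Hi; right; auto].
Qed.

Lemma has_sum_intro {T : Type} (P : T -> Prop) f s :
  (forall L, NoDup L -> Forall P L -> lsum f L <= s) ->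
  (forall eps, 0 < eps -> exists L, NoDup L /\ Forall P L /\ s - eps < lsum f L) ->
  has_sum P f s.
Proof.
  intros Hub Hap. split.
  - intros x [L [H1 [H2 ->]]]. apply Hub; auto.
  - intros b Hb. destruct (Rle_dec s b) as [|Hn]; auto. exfalso.
    destruct (Hap (s - b)) as [L [H1 [H2 H3]]]; [lra|].
    assert (lsum f L <= b) by (apply Hb; exists L; auto). lra.
Qed.

Lemma has_sum_ub {T : Type} (P : T -> Prop) f s L :
  has_sum P f s -> NoDup L -> Forall P L -> lsum f L <= s.
Proof. intros [H _] H1 H2. apply H. exists L; auto. Qed.

Lemma has_sum_approx {T : Type} (P : T -> Prop) f s eps : has_sum P f s -> 0 < eps ->
  exists L, NoDup L /\ Forall P L /\ s - eps < lsum f L.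
Proof.
  intros [H1 H2] He. apply NNPP. intros Hn.
  assert (s <= s - eps); [|lra]. apply H2. intros x [L [A [B ->]]].
  apply Rnot_lt_le. intros Hc. apply Hn. exists L; auto.
Qed.

Lemma has_sum_nonneg {T : Type} (P : T -> Prop) f s : has_sum P f s -> 0 <= s.
Proof. intros H. apply (has_sum_ub P f s []); auto; constructor. Qed.

Lemma has_sum_ext {T : Type} (P Q : T -> Prop) f g s : (forall x, P x <-> Q x) ->
  (forall x, Q x -> f x = g x) -> has_sum P f s -> has_sum Q g s.
Proof.
  intros HPQ Hfg H.
  assert (HL : forall L, Forall Q L -> Forall P L /\ lsum g L = lsum f L).
  { intros L HQ. rewrite Forall_forall in *. split; [intros; apply HPQ; auto|].
    apply lsum_ext. intros; symmetry; auto. }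
  apply has_sum_intro.
  - intros L H1 H2. destruct (HL L H2) as [HP ->]. apply (has_sum_ub _ _ _ _ H); auto.
  - intros eps He. destruct (has_sum_approx _ _ _ _ H He) as [L [H1 [H2 H3]]].
    assert (HQ : Forall Q L) by (rewrite Forall_forall in *; intros; apply HPQ; auto).
    exists L; repeat split; auto. destruct (HL L HQ) as [_ ->]; auto.
Qed.

Lemma has_sum_zero {T : Type} (P : T -> Prop) f : (forall x, P x -> f x = 0) -> has_sum P f 0.
Proof.
  intros H. apply has_sum_intro.
  - intros L _ HF. rewrite (lsum_ext f (fun _ => 0)).
    + clear. unfold lsum; induction L; simpl; lra.
    + rewrite Forall_forall in HF; intros; apply H; auto.
  - intros eps He; exists []; repeat split; try constructor. unfold lsum; simpl; lra.
Qed.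

Lemma has_sum_single {T : Type} (P : T -> Prop) f x0 : nonneg f ->
  (forall x, P x <-> x = x0) -> has_sum P f (f x0).
Proof.
  intros Hf H. apply has_sum_intro.
  - intros [|x [|y L]] H1 H2; unfold lsum; simpl; [apply Hf | |].
    + inversion H2; subst. apply H in H4; subst. lra.
    + inversion H2; subst. inversion H5; subst. apply H in H4. apply H in H6. subst.
      inversion H1; subst. exfalso; apply H4; left; auto.
  - intros eps He; exists [x0]; repeat split.
    + constructor; [intros [] | constructor].
    + constructor; [apply H; auto | constructor].
    + unfold lsum; simpl; lra.
Qed.

Lemma has_sum_scale {T : Type} (P : T -> Prop) f s c : 0 <= c ->
  has_sum P f s -> has_sum P (fun x => c * f x) (c * s).
Proof.
  intros Hc H. apply has_sum_intro.
  - intros L H1 H2. rewrite lsum_scal. apply Rmult_le_compat_l; auto. eapply has_sum_ub; eauto.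
  - intros eps He. destruct (Req_dec c 0) as [->|Hc0].
    + exists []; repeat split; try constructor. unfold lsum; simpl; lra.
    + destruct (has_sum_approx _ _ _ (eps / c) H) as [L [H1 [H2 H3]]].
      { apply Rdiv_lt_0_compat; lra. }
      exists L; repeat split; auto. rewrite lsum_scal.
      assert (c * (s - eps / c) = c * s - eps) by (field; auto).
      assert (c * (s - eps / c) < c * lsum f L) by (apply Rmult_lt_compat_l; lra). lra.
Qed.

Lemma has_sum_image {A B : Type} (P : A -> Prop) (f : A -> R) s (F : A -> B) (G : B -> A) :
  (forall a, G (F a) = a) -> has_sum P f s ->
  has_sum (fun b => exists a, P a /\ b = F a) (fun b => f (G b)) s.
Proof.
  intros HGF H. apply has_sum_intro.
  - intros L H1 H2. rewrite Forall_forall in H2.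
    assert (HP : forall b, In b L -> P (G b) /\ b = F (G b)).
    { intros b Hb. destruct (H2 b Hb) as [a [Ha ->]]. rewrite HGF; auto. }
    rewrite <- lsum_map. apply (has_sum_ub _ _ _ _ H).
    + apply NoDup_map_NoDup_ForallPairs; auto. intros x y Hx Hy E.
      rewrite (proj2 (HP x Hx)), (proj2 (HP y Hy)), E; auto.
    + rewrite Forall_forall. intros x Hx. apply in_map_iff in Hx.
      destruct Hx as [y [<- Hy]]. apply HP; auto.
  - intros eps He. destruct (has_sum_approx _ _ _ _ H He) as [L [H1 [H2 H3]]].
    exists (map F L). repeat split.
    + apply NoDup_map_NoDup_ForallPairs; auto. intros x y _ _ E.
      rewrite <- (HGF x), <- (HGF y), E; auto.
    + rewrite Forall_forall in *. intros x Hx. apply in_map_iff in Hx.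
      destruct Hx as [y [<- Hy]]. exists y; auto.
    + rewrite lsum_map. rewrite (lsum_ext _ f); auto. intros; rewrite HGF; auto.
Qed.

Lemma NoDup_list_prod {A B : Type} (X : list A) (Y : list B) :
  NoDup X -> NoDup Y -> NoDup (list_prod X Y).
Proof.
  induction X as [|x X IH]; intros HX HY; simpl; [constructor|]. inversion HX; subst.
  apply NoDup_app; auto.
  - apply FinFun.Injective_map_NoDup; auto. intros a b E; inversion E; auto.
  - intros [a b] Ha Hb. apply in_map_iff in Ha. destruct Ha as [y [E _]]. inversion E; subst.
    apply in_prod_iff in Hb. tauto.
Qed.

Lemma has_sum_prod {A B : Type} (P : A -> Prop) (Q : B -> Prop) f g s1 s2 :
  nonneg f -> nonneg g -> has_sum P f s1 -> has_sum Q g s2 ->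
  has_sum (fun x => P (fst x) /\ Q (snd x)) (fun x => f (fst x) * g (snd x)) (s1 * s2).
Proof.
  intros Hf Hg H1 H2. pose proof (has_sum_nonneg _ _ _ H1). pose proof (has_sum_nonneg _ _ _ H2).
  apply has_sum_intro.
  - (* a finite family of pairs is contained in the product of its two projections *)
    intros L HL HF. rewrite Forall_forall in HF.
    set (X := nodup dec (map fst L)). set (Y := nodup dec (map snd L)).
    assert (HX : lsum f X <= s1).
    { apply (has_sum_ub _ _ _ _ H1); [apply NoDup_nodup|]. rewrite Forall_forall.
      intros a Ha. apply nodup_In, in_map_iff in Ha. destruct Ha as [[a' b] [<- Hin]].
      apply (HF _ Hin). }
    assert (HY : lsum g Y <= s2).
    { apply (has_sum_ub _ _ _ _ H2); [apply NoDup_nodup|]. rewrite Forall_forall.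
      intros b Hb. apply nodup_In, in_map_iff in Hb. destruct Hb as [[a b'] [<- Hin]].
      apply (HF _ Hin). }
    apply Rle_trans with (lsum (fun p => f (fst p) * g (snd p)) (list_prod X Y)).
    + apply lsum_incl; auto.
      * intros [a b]; simpl. apply Rmult_le_pos; auto.
      * apply NoDup_list_prod; apply NoDup_nodup.
      * intros [a b] Hab. apply in_prod; apply nodup_In, in_map_iff; exists (a, b); auto.
    + rewrite lsum_prod. pose proof (lsum_nonneg f X Hf). pose proof (lsum_nonneg g Y Hg).
      apply Rmult_le_compat; auto.
  - (* approximate both factors to precision d and take the product of the lists *)
    intros eps He. set (d := eps / (s1 + s2 + 1)).
    assert (Hd : 0 < d) by (apply Rdiv_lt_0_compat; lra).
    assert (Hd2 : d * (s1 + s2) < eps).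
    { unfold d. apply Rmult_lt_reg_r with (s1 + s2 + 1); [lra|].
      field_simplify; [nra | lra]. }
    destruct (has_sum_approx _ _ _ _ H1 Hd) as [X [HX1 [HX2 HX3]]].
    destruct (has_sum_approx _ _ _ _ H2 Hd) as [Y [HY1 [HY2 HY3]]].
    exists (list_prod X Y). repeat split.
    + apply NoDup_list_prod; auto.
    + rewrite Forall_forall in *. intros [a b] Hab. apply in_prod_iff in Hab.
      simpl; split; [apply HX2 | apply HY2]; tauto.
    + rewrite lsum_prod.
      assert (lsum g Y <= s2) by apply (has_sum_ub _ _ _ _ H2 HY1 HY2).
      pose proof (lsum_nonneg g Y Hg). nra.
Qed.

Lemma lsum_fibers {T : Type} (f : T -> R) (phi : T -> nat) M L :
  (forall x, In x L -> (phi x <= M)%nat) ->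
  lsum f L = sum_f_R0 (fun k => lsum f (filter (fun x => Nat.eqb (phi x) k) L)) M.
Proof.
  induction L as [|x L IH]; intros H.
  - rewrite (sum_eq _ (fun _ => 0)); [rewrite sum_cte; unfold lsum; simpl; ring | reflexivity].
  - assert (Hx : (phi x <= M)%nat) by (apply H; left; auto).
    unfold lsum at 1; simpl; fold (lsum f L).
    rewrite IH by (intros; apply H; right; auto).
    transitivity (sum_f_R0 (fun k => (if Nat.eqb (phi x) k then f x else 0) +
                               lsum f (filter (fun x => Nat.eqb (phi x) k) L)) M).
    + rewrite sum_plus. f_equal.
      clear -Hx. induction M.
      * simpl. replace (phi x) with 0%nat by lia. reflexivity.
      * rewrite tech5. destruct (Nat.eqb_spec (phi x) (S M)) as [E|E].
        -- rewrite sum_eq_R0; [ring|].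
           intros i Hi. destruct (Nat.eqb_spec (phi x) i); [lia | auto].
        -- rewrite Rplus_0_r; apply IHM; lia.
    + apply sum_eq. intros i _. simpl. destruct (Nat.eqb (phi x) i); unfold lsum; simpl; ring.
Qed.

Lemma has_sum_fibers_approx {T : Type} (P : T -> Prop) f (phi : T -> nat) (s : nat -> R) :
  (forall k, has_sum (fun x => P x /\ phi x = k) f (s k)) ->
  forall N d, 0 < d -> exists L, NoDup L /\ Forall P L /\
    (forall x, In x L -> (phi x <= N)%nat) /\ sum_f_R0 s N - d < lsum f L.
Proof.
  intros Hs. induction N; intros d Hd.
  - destruct (has_sum_approx _ _ _ _ (Hs 0%nat) Hd) as [L [H1 [H2 H3]]].
    rewrite Forall_forall in H2. exists L; repeat split; auto.
    + rewrite Forall_forall; intros; apply H2; auto.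
    + intros x Hx; destruct (H2 x Hx); lia.
  - destruct (IHN (d/2)) as [L1 [A1 [B1 [C1 D1]]]]; [lra|].
    destruct (has_sum_approx _ _ _ (d/2) (Hs (S N))) as [L2 [A2 [B2 C2]]]; [lra|].
    rewrite Forall_forall in B2. exists (L1 ++ L2). repeat split.
    + apply NoDup_app; auto. intros a Ha Hb. apply C1 in Ha. destruct (B2 a Hb). lia.
    + apply Forall_app; split; auto. rewrite Forall_forall; intros; apply B2; auto.
    + intros x Hx. apply in_app_or in Hx. destruct Hx as [Hx|Hx]; [apply C1 in Hx; lia|].
      destruct (B2 x Hx); lia.
    + rewrite lsum_app, tech5. lra.
Qed.

Lemma has_sum_partition {T : Type} (P : T -> Prop) f (phi : T -> nat) (s : nat -> R) (l : R) :
  nonneg f -> (forall k, has_sum (fun x => P x /\ phi x = k) f (s k)) ->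
  is_lim_seq (sum_f_R0 s) l -> has_sum P f l.
Proof.
  intros Hf Hs Hc. apply is_lim_seq_Reals in Hc.
  assert (Hs0 : forall k, 0 <= s k) by (intros; eapply has_sum_nonneg; eauto).
  assert (Hg : Un_growing (sum_f_R0 s)) by (intros k; rewrite tech5; specialize (Hs0 (S k)); lra).
  apply has_sum_intro.
  - (* a finite list only meets the fibers 0..M *)
    intros L HL HF.
    set (M := fold_right Nat.max 0%nat (map phi L)).
    assert (HM : forall x, In x L -> (phi x <= M)%nat).
    { unfold M; clear. induction L as [|y L IHL]; simpl; intros x Hx; [destruct Hx|].
      destruct Hx as [->|Hx]; [lia|]. specialize (IHL x Hx); lia. }
    rewrite (lsum_fibers f phi M L HM).
    apply Rle_trans with (sum_f_R0 s M); [|apply growing_ineq; auto].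
    apply sum_Rle. intros k _. apply (has_sum_ub _ _ _ _ (Hs k)).
    + apply NoDup_filter; auto.
    + rewrite Forall_forall in *. intros x Hx. apply filter_In in Hx. destruct Hx as [Hx E].
      apply Nat.eqb_eq in E. split; auto.
  - intros eps He. destruct (Hc (eps/2)) as [N HN]; [lra|].
    specialize (HN N (Nat.le_refl _)). unfold R_dist in HN. apply Rabs_def2 in HN.
    destruct (has_sum_fibers_approx P f phi s Hs N (eps/2)) as [L [A [B [C D]]]]; [lra|].
    exists L; repeat split; auto. lra.
Qed.

Lemma has_sum_partition_fin {T : Type} (P : T -> Prop) f (phi : T -> nat) (s : nat -> R) N :
  nonneg f -> (forall k, (k <= N)%nat -> has_sum (fun x => P x /\ phi x = k) f (s k)) ->
  (forall x, P x -> (phi x <= N)%nat) -> has_sum P f (sum_f_R0 s N).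
Proof.
  intros Hf Hs Hb.
  set (s' := fun k => if Nat.leb k N then s k else 0).
  apply (has_sum_partition P f phi s'); auto.
  - intros k. unfold s'. destruct (Nat.leb_spec k N); [apply Hs; auto|].
    apply has_sum_zero. intros x [Hx E]. apply Hb in Hx. lia.
  - apply (is_lim_seq_ext_loc (fun _ => sum_f_R0 s N)); [|apply is_lim_seq_const].
    exists N. intros n Hn. induction Hn.
    + apply sum_eq. intros i Hi. unfold s'. destruct (Nat.leb_spec i N); [auto | lia].
    + rewrite tech5, <- IHHn. unfold s'. destruct (Nat.leb_spec (S m) N); [lia | ring].
Qed.

Lemma has_sum_point {T : Type} (P : T -> Prop) f x0 : nonneg f -> P x0 ->
  (forall x, P x -> x <> x0 -> f x = 0) -> has_sum P f (f x0).
Proof.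
  intros Hf H0 H.
  replace (f x0) with (sum_f_R0 (fun k => if Nat.eqb k 0 then f x0 else 0) 1) by (simpl; ring).
  apply (has_sum_partition_fin P f (fun x => if dec x x0 then 0%nat else 1%nat)); auto.
  - intros [|[|k]] Hk; simpl; [| | lia].
    + apply has_sum_single; auto. intros x; split.
      * intros [_ E]. destruct (dec x x0); auto; discriminate.
      * intros ->. split; auto. destruct (dec x0 x0); auto; congruence.
    + apply has_sum_zero. intros x [Hx E]. destruct (dec x x0); [discriminate|]. apply H; auto.
  - intros x _. destruct (dec x x0); lia.
Qed.

(** * Convolution of sequences indexed by nat *)

(* Convolution of sequences on nat (the law of a sum of independent variables),
   and its unit, the Dirac mass at 0. *)
Definition conv (f g : nat -> R) (a : nat) : R := sum_f_R0 (fun b => f b * g (a - b)%nat) a.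
Definition delta (a : nat) : R := if Nat.eqb a 0 then 1 else 0.

Fixpoint convl (Vs : list (nat -> R)) : nat -> R :=
  match Vs with
  | [] => delta
  | V :: Vs' => conv V (convl Vs')
  end.

Definition convpow (K : nat) (pi : nat -> R) : nat -> R := convl (repeat pi K).

Lemma convpow_0 pi : convpow 0 pi = delta.
Proof. reflexivity. Qed.

Lemma convpow_S K pi : convpow (S K) pi = conv pi (convpow K pi).
Proof. reflexivity. Qed.

Lemma sum_first (f : nat -> R) a : sum_f_R0 f (S a) = f 0%nat + sum_f_R0 (fun i => f (S i)) a.
Proof. rewrite decomp_sum by lia. reflexivity. Qed.

Lemma conv_ext (f1 f2 g1 g2 : nat -> R) a :
  (forall b, (b <= a)%nat -> f1 b = f2 b /\ g1 b = g2 b) -> conv f1 g1 a = conv f2 g2 a.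
Proof.
  intros H. apply sum_eq. intros i Hi.
  rewrite (proj1 (H i Hi)), (proj2 (H (a - i)%nat ltac:(lia))). reflexivity.
Qed.

Lemma conv_delta_l u a : conv delta u a = u a.
Proof.
  unfold conv. destruct a; [unfold delta; simpl; ring|].
  rewrite sum_first, sum_eq_R0; [unfold delta; simpl; ring|]. intros i _; unfold delta; simpl; ring.
Qed.

Lemma conv_delta_r u a : conv u delta a = u a.
Proof.
  unfold conv. destruct a; [unfold delta; simpl; ring|].
  rewrite tech5, sum_eq_R0, Nat.sub_diag; [unfold delta; simpl; ring|].
  intros i Hi. unfold delta. destruct (Nat.eqb_spec (S a - i) 0); [lia | ring].
Qed.

Lemma sum_swap (F : nat -> nat -> R) a N :
  sum_f_R0 (fun K => sum_f_R0 (fun b => F K b) a) N =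
  sum_f_R0 (fun b => sum_f_R0 (fun K => F K b) N) a.
Proof.
  induction N; [reflexivity|].
  rewrite tech5, IHN, <- sum_plus. apply sum_eq. intros; rewrite tech5; reflexivity.
Qed.

Lemma sum_triangle (F : nat -> nat -> R) a :
  sum_f_R0 (fun b => sum_f_R0 (fun c => F c b) b) a =
  sum_f_R0 (fun c => sum_f_R0 (fun e => F c (c + e)%nat) (a - c)) a.
Proof.
  induction a; [reflexivity|].
  rewrite tech5, IHa. symmetry. rewrite tech5, Nat.sub_diag. simpl (sum_f_R0 _ 0).
  rewrite Nat.add_0_r.
  rewrite (sum_eq (fun c => sum_f_R0 (fun e => F c (c + e)%nat) (S a - c))
                  (fun c => sum_f_R0 (fun e => F c (c + e)%nat) (a - c) + F c (S a))).
  - rewrite sum_plus, tech5. ring.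
  - intros i Hi. replace (S a - i)%nat with (S (a - i)) by lia. rewrite tech5.
    do 3 f_equal. lia.
Qed.

Lemma conv_assoc f g h a : conv (conv f g) h a = conv f (conv g h) a.
Proof.
  unfold conv.
  transitivity (sum_f_R0 (fun b => sum_f_R0 (fun c => f c * g (b - c)%nat * h (a - b)%nat) b) a).
  - apply sum_eq. intros b _. rewrite Rmult_comm, scal_sum. apply sum_eq; intros; ring.
  - rewrite sum_triangle. apply sum_eq. intros c Hc. rewrite scal_sum. apply sum_eq. intros e He.
    replace (c + e - c)%nat with e by lia. replace (a - (c + e))%nat with (a - c - e)%nat by lia.
    ring.
Qed.

Lemma convpow_add pi k1 k2 a :
  conv (convpow k1 pi) (convpow k2 pi) a = convpow (k1 + k2) pi a.
Proof.
  revert a. induction k1; intros a; [apply conv_delta_l|].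
  simpl. rewrite convpow_S, conv_assoc.
  apply conv_ext. intros; split; auto.
Qed.

Lemma convpow_one pi a : convpow 1 pi a = pi a.
Proof. apply conv_delta_r. Qed.

Lemma convpow_at_0 pi K : convpow K pi 0 = pi 0%nat ^ K.
Proof. induction K; [reflexivity|]. rewrite convpow_S. unfold conv; simpl. rewrite IHK. ring. Qed.

Lemma convpow_nonneg pi K a : nonneg pi -> 0 <= convpow K pi a.
Proof.
  intros Hp. revert a; induction K; intros a.
  - rewrite convpow_0. unfold delta. destruct (Nat.eqb a 0); lra.
  - rewrite convpow_S. apply cond_pos_sum. intros; apply Rmult_le_pos; auto.
Qed.

Lemma convl_convpow (pi : nat -> R) {T : Type} (w : T -> R) (k : T -> nat) lt a :
  convl (map (fun t b => w t * convpow (k t) pi b) lt) a =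
  fold_right Rmult 1 (map w lt) * convpow (fold_right Nat.add 0%nat (map k lt)) pi a.
Proof.
  revert a. induction lt as [|t lt IH]; intros a; [simpl; rewrite Rmult_1_l; reflexivity|].
  simpl. rewrite <- convpow_add. unfold conv.
  rewrite scal_sum. apply sum_eq. intros i _. rewrite IH. ring.
Qed.

(** * Laws of the generation sizes of a Galton-Watson tree *)

Definition children (t : ptree) : list ptree := match t with Node l => l end.

Lemma Rprod_map_nonneg {T : Type} (f : T -> R) l : nonneg f -> 0 <= Rprod (map f l).
Proof. intros Hf; induction l; simpl; [lra | apply Rmult_le_pos; auto]. Qed.

Lemma gw_law_nonneg p : nonneg p -> forall h, nonneg (gw_law p h).
Proof.
  intros Hp h. induction h; intros [l]; simpl.
  - destruct l; lra.
  - apply Rmult_le_pos; auto. apply Rprod_map_nonneg; auto.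
Qed.

Lemma has_sum_lists_conv {T S : Type} (d : T) (Rl : S -> T -> Prop) (g : T -> nat)
  (f : T -> R) (V : S -> nat -> R) :
  nonneg f -> (forall s b, has_sum (fun c => Rl s c /\ g c = b) f (V s b)) ->
  forall ss a, has_sum (fun l => Forall2 Rl ss l /\ fold_right Nat.add 0%nat (map g l) = a)
                       (fun l => Rprod (map f l)) (convl (map V ss) a).
Proof.
  intros Hf HV. assert (Hf' : nonneg (fun l => Rprod (map f l))).
  { intros l; apply Rprod_map_nonneg; auto. }
  induction ss as [|s ss IH]; intros a.
  - simpl. unfold delta. destruct (Nat.eqb_spec a 0) as [->|Ha].
    + apply (has_sum_single _ (fun l => Rprod (map f l)) []); auto.
      intros l; split; [intros [H _]; inversion H; auto | intros ->; split; auto].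
    + apply has_sum_zero. intros l [H1 H2]. inversion H1; subst. simpl in *. lia.
  - (* split according to the size k of the first child *)
    simpl. apply (has_sum_partition_fin _ _ (fun l => match l with c :: _ => g c | [] => 0%nat end));
      auto.
    + intros k Hk.
      pose proof (has_sum_image _ _ _ (fun pr => fst pr :: snd pr)
                    (fun l => match l with c :: l' => (c, l') | [] => (d, []) end)
                    (fun pr => match pr with (x, y) => eq_refl end)
                    (has_sum_prod _ _ _ _ _ _ Hf Hf' (HV s k) (IH (a - k)%nat))) as HI.
      eapply has_sum_ext; [| | exact HI].
      * intros l; split.
        -- intros [[c l'] [[[H1 H2] [H3 H4]] ->]]; simpl in *. repeat split; auto. lia.
        -- intros [[H1 H2] H3]. destruct l as [|c l']; [inversion H1|].
           inversion H1; subst. exists (c, l'); simpl in *; repeat split; auto. lia.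
      * intros l [[H1 _] _]. inversion H1; subst. reflexivity.
    + intros [|c l] [H1 H2]; [lia|]. simpl in H2. lia.
Qed.

Lemma has_sum_node (Pl : list ptree -> Prop) (f : ptree -> R) (w : list ptree -> R) s :
  has_sum Pl w s -> (forall l, Pl l -> f (Node l) = w l) ->
  has_sum (fun t => exists l, Pl l /\ t = Node l) f s.
Proof.
  intros H Hf. pose proof (has_sum_image _ _ _ Node children (fun _ => eq_refl) H) as HI.
  eapply has_sum_ext; [intros; apply iff_refl | | exact HI].
  intros t [l [Hl ->]]. symmetry; auto.
Qed.

Lemma Forall2_restr (h : nat) lt l :
  Forall2 (fun t c => restr h c = t) lt l <-> map (restr h) l = lt.
Proof.
  revert l; induction lt as [|t lt IH]; intros [|c l]; split; intros H; simpl in *;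
    try (inversion H; fail); auto.
  - inversion H; subst. f_equal. apply IH; auto.
  - inversion H; subst. constructor; auto. apply IH; auto.
Qed.

Lemma Forall2_length (K : nat) (l : list ptree) :
  Forall2 (fun (_ : unit) (_ : ptree) => True) (repeat tt K) l <-> length l = K.
Proof.
  revert l; induction K as [|K IH]; intros [|c l]; split; intros H; simpl in *;
    try (inversion H; fail); auto.
  - inversion H; subst. f_equal. apply IH; auto.
  - constructor; auto. apply IH; lia.
Qed.

Lemma gen_law (p : nat -> R) (pi : nat -> nat -> R) : nonneg p ->
  (forall b, pi 0%nat b = if Nat.eqb b 1 then 1 else 0) ->
  (forall j b, is_lim_seq (sum_f_R0 (fun K => p K * convpow K (pi j) b)) (pi (S j) b)) ->
  forall j b, has_sum (fun c => gen j c = b) (gw_law p j) (pi j b).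
Proof.
  intros Hp H0 Hrec. induction j; intros b.
  - rewrite H0. destruct (Nat.eqb_spec b 1) as [->|Hb].
    + apply (has_sum_point _ (gw_law p 0) (Node [])); auto.
      * apply gw_law_nonneg; auto.
      * intros [[|x l]] _ Hn; simpl; auto. congruence.
    + apply has_sum_zero. intros x Hx. simpl in Hx. congruence.
  - (* split according to the number K of children of the root *)
    apply (has_sum_partition _ _ (fun c => length (children c))
             (fun K => p K * convpow K (pi j) b) _ (gw_law_nonneg p Hp _)); [| apply Hrec].
    intros K.
    pose proof (has_sum_lists_conv (Node []) (fun (_ : unit) (_ : ptree) => True) (gen j)
                  (gw_law p j) (fun _ => pi j) (gw_law_nonneg p Hp j)) as HF.
    specialize (HF ltac:(intros s b'; eapply has_sum_ext; [| | apply (IHj b')]; intros; tauto)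
                  (repeat tt K) b).
    rewrite map_repeat in HF. fold (convpow K (pi j)) in HF.
    apply (has_sum_scale _ _ _ (p K) (Hp K)), has_sum_node with (f := gw_law p (S j)) in HF.
    + eapply has_sum_ext; [| intros; reflexivity | exact HF].
      intros [l]; split.
      * intros [l' [[H1 H2] E]]. injection E as ->. apply Forall2_length in H1. simpl; auto.
      * intros [H1 H2]. exists l; simpl in *. rewrite Forall2_length; auto.
    + intros l [H1 H2]. apply Forall2_length in H1. simpl. rewrite H1. reflexivity.
Qed.

(* Joint law of (r_h, G_{h+j}): given the laws pi j of the generation sizes,
   P(r_h = t, G_{h+j} = a) = P(r_h = t) * (pi j)^{*G_h(t)}(a), since the
   G_h(t) subtrees rooted at height h are independent GW trees. *)
Lemma restr_gen_law (p : nat -> R) (pi : nat -> nat -> R) : nonneg p ->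
  (forall j b, has_sum (fun c => gen j c = b) (gw_law p j) (pi j b)) ->
  forall h j t a, has_sum (fun s => restr h s = t /\ gen (h + j) s = a) (gw_law p (h + j))
                          (gw_law p h t * convpow (gen h t) (pi j) a).
Proof.
  intros Hp Hgen. induction h; intros j [lt] a.
  - destruct lt as [|x lt]; simpl.
    + rewrite convpow_one, Rmult_1_l.
      eapply has_sum_ext; [| intros; reflexivity | apply (Hgen j a)]. intros s; tauto.
    + rewrite Rmult_0_l. apply has_sum_zero. intros s [H _]. discriminate.
  - pose proof (has_sum_lists_conv (Node []) (fun t c => restr h c = t) (gen (h + j))
                  (gw_law p (h + j)) (fun t b => gw_law p h t * convpow (gen h t) (pi j) b)
                  (gw_law_nonneg p Hp _) (fun t b => IHh j t b) lt a) as HF.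
    rewrite convl_convpow in HF.
    apply (has_sum_scale _ _ _ (p (length lt)) (Hp _)),
      has_sum_node with (f := gw_law p (S h + j)) in HF.
    + replace (gw_law p (S h) (Node lt) * convpow (gen (S h) (Node lt)) (pi j) a)
        with (p (length lt) * (Rprod (map (gw_law p h) lt) *
              convpow (fold_right Nat.add 0%nat (map (gen h) lt)) (pi j) a)) by (simpl; ring).
      eapply has_sum_ext; [| intros; reflexivity | exact HF].
      intros [l]; split.
      * intros [l' [[H1 H2] E]]. injection E as ->. apply Forall2_restr in H1.
        simpl. rewrite H1. split; auto.
      * intros [H1 H2]. exists l. simpl in H1, H2. injection H1 as H1. repeat split; auto.
        apply Forall2_restr; auto.
    + intros l [H1 H2]. apply Forall2_restr in H1. simpl. rewrite <- H1, length_map. reflexivity.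
Qed.

(** * The linear-fractional family of laws on nat *)

(* lfrac z is the law with generating function z + (1-z)^2 s / (1 - z s):
   mass z at 0 and (1-z)^2 z^(b-1) at b >= 1 (it has mean 1). *)
Definition lfrac (z : R) (b : nat) : R :=
  match b with O => z | S b' => (1 - z) ^ 2 * z ^ b' end.

(* Parameter of the composition of two linear-fractional generating functions. *)
Definition lfrac_comp (y z : R) : R := (y + z - 2 * y * z) / (1 - y * z).

Lemma lfrac_nonneg z : 0 <= z <= 1 -> nonneg (lfrac z).
Proof. intros Hz [|b]; simpl; [lra|]. apply Rmult_le_pos; [nra | apply pow_le; lra]. Qed.

Lemma is_lim_seq_sum_f_R0 (F : nat -> nat -> R) (l : nat -> R) n :
  (forall i, (i <= n)%nat -> is_lim_seq (fun N => F N i) (l i)) ->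
  is_lim_seq (fun N => sum_f_R0 (F N) n) (sum_f_R0 l n).
Proof.
  induction n; intros H; simpl; [apply H; lia|].
  apply is_lim_seq_plus'; [apply IHn; intros; apply H; lia | apply H; lia].
Qed.

Lemma affine_recursion_lim (x e : nat -> R) c rho : 0 <= rho < 1 ->
  (forall N, x (S N) = c + rho * x N + e N) -> is_lim_seq e 0 ->
  is_lim_seq x (c / (1 - rho)).
Proof.
  intros Hr Hx He. apply is_lim_seq_Reals in He. apply is_lim_seq_Reals.
  intros eps Heps. set (L := c / (1 - rho)).
  assert (HD : forall N, x (S N) - L = rho * (x N - L) + e N).
  { intros N. rewrite Hx. unfold L. field. lra. }
  set (eta := eps * (1 - rho) / 2).
  assert (Heta : eta / (1 - rho) = eps / 2) by (unfold eta; field; lra).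
  assert (Heta0 : 0 < eta) by (unfold eta; apply Rmult_lt_0_compat; [apply Rmult_lt_0_compat|]; lra).
  destruct (He eta Heta0) as [M HM].
  (* after time M the distance to L contracts up to an error eta / (1 - rho) *)
  assert (Hk : forall k, Rabs (x (k + M)%nat - L) <= rho ^ k * Rabs (x M - L) + eps / 2).
  { induction k; simpl; [lra|]. rewrite HD.
    specialize (HM (k + M)%nat ltac:(lia)). unfold R_dist in HM. rewrite Rminus_0_r in HM.
    eapply Rle_trans; [apply Rabs_triang|]. rewrite Rabs_mult, (Rabs_right rho) by lra.
    assert (rho * Rabs (x (k + M)%nat - L) <= rho * (rho ^ k * Rabs (x M - L) + eps / 2))
      by (apply Rmult_le_compat_l; lra).
    assert (rho * (eps / 2) + eta = eps / 2) by (rewrite <- Heta; field; lra). nra. }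
  assert (Hgeo : exists K, forall k, (K <= k)%nat -> rho ^ k * Rabs (x M - L) < eps / 2).
  { pose proof (Rabs_pos (x M - L)) as Hpos.
    destruct (pow_lt_1_zero rho ltac:(rewrite Rabs_right; lra) (eps / 2 / (Rabs (x M - L) + 1)))
      as [K HK]; [apply Rdiv_lt_0_compat; lra|].
    exists K. intros k Hk'. specialize (HK k Hk'). rewrite Rabs_right in HK by (apply Rle_ge, pow_le; lra).
    apply (Rmult_lt_compat_r (Rabs (x M - L) + 1)) in HK; [|lra].
    unfold Rdiv in HK at 1. rewrite Rmult_assoc, Rinv_l in HK by lra.
    assert (0 <= rho ^ k) by (apply pow_le; lra). nra. }
  destruct Hgeo as [K HK]. exists (K + M)%nat. intros n Hn. unfold R_dist.
  replace n with ((n - M) + M)%nat by lia.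
  eapply Rle_lt_trans; [apply Hk|]. specialize (HK (n - M)%nat ltac:(lia)). lra.
Qed.

Definition green_partial (y : R) (pi : nat -> R) (N a : nat) : R :=
  sum_f_R0 (fun K => y ^ K * convpow K pi a) N.

Lemma green_partial_renewal y pi N a :
  green_partial y pi (S N) a = delta a + y * conv pi (green_partial y pi N) a.
Proof.
  unfold green_partial. rewrite sum_first. simpl (y ^ 0). rewrite Rmult_1_l. f_equal.
  unfold conv.
  transitivity (sum_f_R0 (fun K => sum_f_R0 (fun b => y ^ S K * (pi b * convpow K pi (a - b)%nat)) a) N).
  - apply sum_eq. intros K _. rewrite convpow_S. unfold conv. rewrite scal_sum.
    apply sum_eq; intros; ring.
  - rewrite sum_swap, scal_sum. apply sum_eq. intros b _.
    unfold green_partial. rewrite Rmult_comm, scal_sum, scal_sum.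
    apply sum_eq. intros K _. simpl. ring.
Qed.

(* Closed form of the Green function sum_K y^K (lfrac z)^{*K}. *)
Definition green (y z : R) (a : nat) : R :=
  match a with
  | O => / (1 - y * z)
  | S a' => lfrac_comp y z ^ a' * y * (1 - z) ^ 2 / (1 - y * z) ^ 2
  end.

Lemma green_geom_conv y z a : 0 <= y < 1 -> 0 <= z < 1 ->
  sum_f_R0 (fun i => z ^ i * green y z (a - i)%nat) a = lfrac_comp y z ^ a / (1 - y * z).
Proof.
  intros Hy Hz. assert (Hyz : 1 - y * z <> 0) by nra.
  induction a; [simpl; field; auto|].
  rewrite sum_first, (sum_eq _ (fun i => (z ^ i * green y z (a - i)%nat) * z)).
  - rewrite <- scal_sum, IHa. simpl. unfold lfrac_comp. field; auto.
  - intros i _. simpl. ring.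
Qed.

Lemma green_partial_renewal_S y z N n :
  green_partial y (lfrac z) (S N) (S n) =
  y * z * green_partial y (lfrac z) N (S n) +
  y * sum_f_R0 (fun i => lfrac z (S i) * green_partial y (lfrac z) N (n - i)%nat) n.
Proof. rewrite green_partial_renewal. unfold conv. rewrite sum_first. unfold delta; simpl; ring. Qed.

(* The Green sums converge to the closed form, by strong induction on the level a:
   each level satisfies an affine recursion whose error terms involve lower levels. *)
Lemma green_partial_lim y z : 0 < y < 1 -> 0 <= z < 1 ->
  forall a, is_lim_seq (fun N => green_partial y (lfrac z) N a) (green y z a).
Proof.
  intros Hy Hz. assert (Hyz : 0 <= y * z < 1) by nra.
  assert (Hyz' : 1 - y * z <> 0) by lra.
  assert (strong : forall n a, (a <= n)%nat ->
            is_lim_seq (fun N => green_partial y (lfrac z) N a) (green y z a)).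
  2: { intros a; apply (strong a); lia. }
  induction n; intros a Ha.
  - replace a with 0%nat by lia.
    replace (green y z 0) with (1 / (1 - y * z)) by (simpl; field; auto).
    apply (affine_recursion_lim _ (fun _ => 0) 1 (y * z)); [auto | | apply is_lim_seq_const].
    intros N. rewrite green_partial_renewal. unfold conv, delta; simpl; ring.
  - destruct (Nat.le_gt_cases a n) as [Hle|Hlt]; [apply IHn; auto|]. replace a with (S n) by lia.
    set (c := y * sum_f_R0 (fun i => lfrac z (S i) * green y z (n - i)%nat) n).
    replace (green y z (S n)) with (c / (1 - y * z)).
    + apply (affine_recursion_lim _ (fun N => sum_f_R0 (fun i => y * lfrac z (S i) *
               (green_partial y (lfrac z) N (n - i)%nat - green y z (n - i)%nat)) n) c (y * z)); auto.
      * intros N. rewrite green_partial_renewal_S. unfold c.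
        assert (sum_f_R0 (fun i => y * lfrac z (S i) * (green_partial y (lfrac z) N (n - i)%nat
                  - green y z (n - i)%nat)) n =
                y * sum_f_R0 (fun i => lfrac z (S i) * green_partial y (lfrac z) N (n - i)%nat) n -
                y * sum_f_R0 (fun i => lfrac z (S i) * green y z (n - i)%nat) n).
        { rewrite !scal_sum, <- minus_sum. apply sum_eq; intros; ring. }
        lra.
      *
        rewrite <- (sum_eq_R0 (fun _ => 0) n) by auto.
        apply is_lim_seq_sum_f_R0. intros i Hi.
        replace (Finite 0) with (Finite (y * lfrac z (S i) * (green y z (n - i)%nat - green y z (n - i)%nat)))
          by (f_equal; ring).
        apply is_lim_seq_mult'; [apply is_lim_seq_const|].
        apply is_lim_seq_minus'; [apply IHn; lia | apply is_lim_seq_const].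
    + unfold c. rewrite (sum_eq _ (fun i => (z ^ i * green y z (n - i)%nat) * (1 - z) ^ 2))
        by (intros; simpl; ring).
      rewrite <- scal_sum, green_geom_conv by lra. simpl. field; auto.
Qed.

(* Composition: a sum of lfrac(y)-many i.i.d. lfrac(z) variables has law
   lfrac(lfrac_comp y z); this is the law-level form of f_y o f_z = f_{y o z}. *)
Lemma lfrac_compose y z a : 0 < y < 1 -> 0 <= z < 1 ->
  is_lim_seq (sum_f_R0 (fun K => lfrac y K * convpow K (lfrac z) a)) (lfrac (lfrac_comp y z) a).
Proof.
  intros Hy Hz. assert (Hyz : 1 - y * z <> 0) by nra.
  set (k := (1 - y) ^ 2 / y).
  (* lfrac y K = y delta_0(K) + k y^K, so the partial sums are affine in the Green sums *)
  apply (is_lim_seq_ext (fun N => y * delta a + k * (green_partial y (lfrac z) N a - delta a))).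
  - intros N. induction N.
    + unfold green_partial. simpl. rewrite convpow_0. ring.
    + rewrite tech5, <- IHN. unfold green_partial. rewrite tech5.
      simpl lfrac. unfold k. replace (y ^ S N) with (y * y ^ N) by reflexivity. field. lra.
  - replace (lfrac (lfrac_comp y z) a) with (y * delta a + k * (green y z a - delta a)).
    + apply is_lim_seq_plus'; [apply is_lim_seq_const|].
      apply is_lim_seq_mult'; [apply is_lim_seq_const|].
      apply is_lim_seq_minus'; [apply green_partial_lim; auto | apply is_lim_seq_const].
    + unfold k. destruct a; unfold delta; simpl; unfold lfrac_comp; field; split; lra.
Qed.

(** * Generation sizes for the geometric offspring distribution *)

Lemma geom_offspring_lfrac q k : geom_offspring q k = lfrac (1 - q) k.
Proof. destruct k; simpl; [ring|]. replace (1 - (1 - q)) with q by ring. reflexivity. Qed.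

Lemma geom_offspring_nonneg q : 0 < q < 1 -> nonneg (geom_offspring q).
Proof. intros Hq k. rewrite geom_offspring_lfrac. apply lfrac_nonneg. lra. Qed.

(* G_n has law lfrac (gen_param q n), with gen_param q n = n c / (1 + n c)
   and c = (1-q)/q. *)
Definition gen_param (q : R) (n : nat) : R :=
  INR n * ((1 - q) / q) / (1 + INR n * ((1 - q) / q)).

Lemma gen_param_bounds q j : 0 < q < 1 -> 0 <= gen_param q j < 1.
Proof.
  intros Hq. assert (0 < (1 - q) / q) by (apply Rdiv_lt_0_compat; lra).
  pose proof (pos_INR j). assert (0 <= INR j * ((1 - q) / q)) by nra. unfold gen_param. split.
  - apply Rmult_le_pos; [nra|]. left; apply Rinv_0_lt_compat; lra.
  - apply (Rmult_lt_reg_r (1 + INR j * ((1 - q) / q))); [lra|].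
    unfold Rdiv at 1. rewrite Rmult_assoc, Rinv_l; lra.
Qed.

Lemma gen_param_S q j : 0 < q < 1 -> lfrac_comp (1 - q) (gen_param q j) = gen_param q (S j).
Proof.
  intros Hq. pose proof (pos_INR j).
  unfold lfrac_comp, gen_param. rewrite S_INR.
  assert (0 <= INR j * q * (1 - q)) by (apply Rmult_le_pos; [apply Rmult_le_pos|]; lra).
  field. repeat split; nra.
Qed.

Lemma geom_gen_law q : 0 < q < 1 -> forall n a,
  has_sum (fun s => gen n s = a) (gw_law (geom_offspring q) n) (lfrac (gen_param q n) a).
Proof.
  intros Hq. apply (gen_law _ (fun j => lfrac (gen_param q j))).
  - apply geom_offspring_nonneg; auto.
  - intros b. replace (gen_param q 0) with 0 by (unfold gen_param; simpl INR; unfold Rdiv; ring).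
    destruct b as [|[|b]]; simpl; ring.
  - intros j b. rewrite <- gen_param_S by auto.
    apply (is_lim_seq_ext (sum_f_R0 (fun K => lfrac (1 - q) K * convpow K (lfrac (gen_param q j)) b))).
    + intros N. apply sum_eq. intros; rewrite geom_offspring_lfrac; auto.
    + apply lfrac_compose; [lra | apply gen_param_bounds; auto].
Qed.

(** * Two-sided bounds on convolution powers of lfrac z *)

(* For k summands of total a+1, the dominant configurations are those with a
   single nonzero summand; this gives
     k z^k <= (lfrac z)^{*k}(a+1) / ((1-z)^2 z^a) <= k (1+E)^k,
   where E = A (1-z)^2 / z for any A >= a. *)

(* One more summand: either it is 0 (weight z) or it has size i+1. *)
Lemma convpow_lfrac_S z k a :
  convpow (S k) (lfrac z) (S a) =
  z * convpow k (lfrac z) (S a) +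
  sum_f_R0 (fun i => lfrac z (S i) * convpow k (lfrac z) (a - i)%nat) a.
Proof. rewrite convpow_S. unfold conv. rewrite sum_first. reflexivity. Qed.

Lemma sum_ge_last (f : nat -> R) n : (forall i, 0 <= f i) -> f n <= sum_f_R0 f n.
Proof. intros H. destruct n; simpl; [lra|]. pose proof (cond_pos_sum f n H). lra. Qed.

(* Lower bound: keep only configurations with a single nonzero summand. *)
Lemma convpow_lfrac_lower z : 0 < z < 1 -> forall k a,
  INR k * z ^ k * ((1 - z) ^ 2 * z ^ a) <= convpow k (lfrac z) (S a).
Proof.
  intros Hz k. induction k; intros a.
  - rewrite convpow_0. unfold delta; simpl. lra.
  - rewrite convpow_lfrac_S.
    (* the configuration where the last summand carries everything *)
    assert (Hlast : (1 - z) ^ 2 * z ^ a * z ^ k <=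
                    sum_f_R0 (fun i => lfrac z (S i) * convpow k (lfrac z) (a - i)%nat) a).
    { eapply Rle_trans; [| apply sum_ge_last].
      - rewrite Nat.sub_diag, convpow_at_0. simpl. lra.
      - intros i. apply Rmult_le_pos; [apply lfrac_nonneg; lra|].
        apply convpow_nonneg, lfrac_nonneg; lra. }
    specialize (IHk a). rewrite S_INR.
    assert (0 <= (1 - z) ^ 2 * z ^ a * z ^ k) by (pose proof (pow_le z a); pose proof (pow_le z k); apply Rmult_le_pos; [apply Rmult_le_pos|]; nra).
    pose proof (pos_INR k). simpl pow. nra.
Qed.

Lemma convpow_lfrac_interior z k a' U E : 0 < z < 1 -> 0 <= U ->
  INR (S a') * (1 - z) ^ 2 / z <= E ->
  (forall b, (b <= a')%nat -> convpow k (lfrac z) (S b) <= U * ((1 - z) ^ 2 * z ^ b)) ->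
  sum_f_R0 (fun i => lfrac z (S i) * convpow k (lfrac z) (S a' - i)%nat) a' <=
  E * U * ((1 - z) ^ 2 * z ^ S a').
Proof.
  intros Hz HU HE Hb.
  assert (Hterm : forall i, (i <= a')%nat ->
            lfrac z (S i) * convpow k (lfrac z) (S a' - i)%nat <= U * (1 - z) ^ 4 * z ^ a').
  { intros i Hi. replace (S a' - i)%nat with (S (a' - i)) by lia. simpl lfrac.
    assert (0 <= (1 - z) ^ 2 * z ^ i) by (apply Rmult_le_pos; [nra | apply pow_le; lra]).
    eapply Rle_trans; [apply Rmult_le_compat_l; [auto | apply Hb; lia]|].
    assert (Hp : z ^ i * z ^ (a' - i) = z ^ a') by (rewrite <- pow_add; f_equal; lia).
    rewrite <- Hp. right; ring. }
  eapply Rle_trans; [apply sum_Rle, Hterm|]. rewrite sum_cte.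
  assert (0 < z ^ a') by (apply pow_lt; lra).
  replace (U * (1 - z) ^ 4 * z ^ a' * INR (S a'))
    with ((INR (S a') * (1 - z) ^ 2 / z) * (U * ((1 - z) ^ 2 * z ^ S a'))) by (simpl; field; lra).
  replace (E * U * ((1 - z) ^ 2 * z ^ S a')) with (E * (U * ((1 - z) ^ 2 * z ^ S a'))) by ring.
  apply Rmult_le_compat_r; auto.
  apply Rmult_le_pos; [auto | apply Rmult_le_pos; [nra | apply pow_le; lra]].
Qed.

Lemma convpow_lfrac_upper z A : 0 < z < 1 -> forall k a, (a <= A)%nat ->
  convpow k (lfrac z) (S a) <=
  INR k * (1 + INR A * (1 - z) ^ 2 / z) ^ k * ((1 - z) ^ 2 * z ^ a).
Proof.
  intros Hz. set (E := INR A * (1 - z) ^ 2 / z).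
  assert (HE : 0 <= E).
  { unfold E. apply Rmult_le_pos; [apply Rmult_le_pos; [apply pos_INR | nra]|].
    left; apply Rinv_0_lt_compat; lra. }
  induction k; intros a Ha.
  - simpl. rewrite convpow_0. unfold delta; simpl. lra.
  - set (U := INR k * (1 + E) ^ k).
    assert (HU : 0 <= U) by (apply Rmult_le_pos; [apply pos_INR | apply pow_le; lra]).
    assert (H1 : 1 <= (1 + E) ^ S k) by (apply pow_R1_Rle; lra).
    assert (Hw : 0 <= (1 - z) ^ 2 * z ^ a) by (apply Rmult_le_pos; [nra | apply pow_le; lra]).
    (* interior configurations plus the one where the last summand carries everything *)
    assert (Hsum : sum_f_R0 (fun i => lfrac z (S i) * convpow k (lfrac z) (a - i)%nat) a <=
                   (E * U + 1) * ((1 - z) ^ 2 * z ^ a)).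
    { destruct a as [|a'].
      - simpl. rewrite convpow_at_0. simpl lfrac.
        assert (z ^ k <= 1) by (rewrite <- (pow1 k); apply pow_incr; lra).
        assert (0 <= E * U) by nra. simpl in Hw. nra.
      - rewrite tech5, Nat.sub_diag, convpow_at_0.
        assert (z ^ k <= 1) by (rewrite <- (pow1 k); apply pow_incr; lra).
        assert (0 <= lfrac z (S (S a'))) by (apply lfrac_nonneg; lra).
        assert (Hint := convpow_lfrac_interior z k a' U E Hz HU).
        specialize (Hint ltac:(unfold E; unfold Rdiv; apply Rmult_le_compat_r;
                                 [left; apply Rinv_0_lt_compat; lra|];
                                 apply Rmult_le_compat_r; [nra | apply le_INR; lia])
                         ltac:(intros b Hb; apply IHk; lia)).
        simpl lfrac in *. simpl in Hw |- *. simpl in Hint. nra. }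
    rewrite convpow_lfrac_S. specialize (IHk a Ha). fold U in IHk.
    apply Rle_trans with ((z * U + E * U + 1) * ((1 - z) ^ 2 * z ^ a)); [nra|].
    apply Rmult_le_compat_r; auto. unfold U. rewrite S_INR. simpl pow. simpl pow in H1.
    assert (0 <= (1 - z) * (INR k * (1 + E) ^ k))
      by (apply Rmult_le_pos; [lra | apply Rmult_le_pos; [apply pos_INR | apply pow_le; lra]]).
    nra.
Qed.

(** * Asymptotics of the conditioning ratio *)

(* Algebra of the parameters z = M c / (1 + M c) and w = (M+H) c / (1 + (M+H) c):
   the quantities that govern the ratio are controlled by a / (M+H)^2. *)

Lemma spread_bound M H c a : 1 <= M -> 0 <= H -> 0 < c -> 0 <= a ->
  0 <= a * (1 - M * c / (1 + M * c)) ^ 2 / (M * c / (1 + M * c)) <=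
  (1 + H) ^ 2 / c ^ 2 * (a / (M + H) ^ 2).
Proof.
  intros HM HH Hc Ha. assert (0 < M * c) by nra.
  replace (a * (1 - M * c / (1 + M * c)) ^ 2 / (M * c / (1 + M * c)))
    with (a / ((1 + M * c) * (M * c))) by (field; lra).
  split; [apply Rmult_le_pos; [lra | left; apply Rinv_0_lt_compat; nra]|].
  (* (1 + M c) M c >= (M c)^2 >= (c (M + H) / (1 + H))^2 *)
  assert (HMH : M + H <= (1 + H) * M) by nra.
  assert (Hsq : (c * (M + H)) ^ 2 <= ((1 + H) * (M * c)) ^ 2) by (apply pow_incr; nra).
  replace ((1 + H) ^ 2 / c ^ 2 * (a / (M + H) ^ 2)) with (a * (1 + H) ^ 2 / (c * (M + H)) ^ 2)
    by (field; nra).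
  apply Rmult_le_reg_r with ((1 + M * c) * (M * c) * (c * (M + H)) ^ 2).
  { apply Rmult_lt_0_compat; [apply Rmult_lt_0_compat; lra | apply pow_lt; nra]. }
  field_simplify; [| nra | nra].
  assert (0 <= a * (1 + H) ^ 2) by nra. nra.
Qed.

Lemma deficit_bound M H c a : 1 <= M -> 0 <= H -> 0 < c -> 0 <= a ->
  0 <= 1 - (M * c / (1 + M * c)) / ((M + H) * c / (1 + (M + H) * c)) <= 1 /\
  a * (1 - (M * c / (1 + M * c)) / ((M + H) * c / (1 + (M + H) * c))) <=
  H * (1 + H) / c * (a / (M + H) ^ 2).
Proof.
  intros HM HH Hc Ha. assert (0 < M * c) by nra.
  replace (1 - (M * c / (1 + M * c)) / ((M + H) * c / (1 + (M + H) * c)))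
    with (H / ((M + H) * (1 + M * c))) by (field; repeat split; nra).
  assert (0 < (M + H) * (1 + M * c)) by nra.
  split; [split|].
  - apply Rmult_le_pos; [lra | left; apply Rinv_0_lt_compat; lra].
  - apply Rmult_le_reg_r with ((M + H) * (1 + M * c)); [lra|]. field_simplify; nra.
  - (* (M + H)(1 + M c) >= M c (M + H) >= c (M + H)^2 / (1 + H) *)
    replace (H * (1 + H) / c * (a / (M + H) ^ 2)) with (a * H * (1 + H) / (c * (M + H) ^ 2))
      by (field; nra).
    apply Rmult_le_reg_r with ((M + H) * (1 + M * c) * (c * (M + H) ^ 2)).
    { apply Rmult_lt_0_compat; [lra | apply Rmult_lt_0_compat; [lra | apply pow_lt; lra]]. }
    field_simplify; [| nra | nra].
    assert (0 <= H * c * (M - 1)) by (apply Rmult_le_pos; nra).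
    assert (c * (M + H) <= (1 + H) * (1 + M * c)) by nra.
    assert (0 <= a * H * (M + H)) by (apply Rmult_le_pos; nra).
    assert (a * H * (M + H) * (c * (M + H)) <= a * H * (M + H) * ((1 + H) * (1 + M * c)))
      by (apply Rmult_le_compat_l; auto).
    nra.
Qed.

Lemma bernoulli_lower x n : 0 <= x <= 1 -> 1 - INR n * x <= (1 - x) ^ n.
Proof.
  intros Hx. induction n; [simpl; lra|]. rewrite S_INR. simpl pow.
  pose proof (pos_INR n). assert (0 <= INR n * x * x) by (apply Rmult_le_pos; [apply Rmult_le_pos|]; lra).
  nra.
Qed.

Lemma pow_to_one (x : nat -> R) (a : nat -> nat) : (forall j, 0 <= 1 - x j <= 1) ->
  is_lim_seq (fun j => INR (a j) * (1 - x j)) 0 -> is_lim_seq (fun j => x j ^ a j) 1.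
Proof.
  intros Hx Hlim. apply (is_lim_seq_le_le (fun j => 1 - INR (a j) * (1 - x j)) _ (fun _ => 1)).
  - intros j. split.
    + replace (x j) with (1 - (1 - x j)) at 2 by ring. apply bernoulli_lower; auto.
    + rewrite <- (pow1 (a j)). apply pow_incr. specialize (Hx j). lra.
  - replace (Finite 1) with (Finite (1 - 0)) by (f_equal; ring).
    apply is_lim_seq_minus'; [apply is_lim_seq_const | auto].
  - apply is_lim_seq_const.
Qed.

Lemma squeeze0 (u v : nat -> R) K : (forall j, 0 <= u j <= K * v j) ->
  is_lim_seq v 0 -> is_lim_seq u 0.
Proof.
  intros H Hv. apply (is_lim_seq_le_le (fun _ => 0) u (fun j => K * v j)); auto.
  - apply is_lim_seq_const.
  - replace (Finite 0) with (Finite (K * 0)) by (f_equal; ring).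
    apply is_lim_seq_mult'; [apply is_lim_seq_const | auto].
Qed.

Section ConditioningRatio.

(* Along n = j + h + 1 (so that n - h = j + 1 >= 1), the conditioning level
   alpha n = a_j + 1 satisfies a_j = o(n^2). *)
Variables (q : R) (h : nat) (a : nat -> nat).
Hypothesis Hq : 0 < q < 1.
Hypothesis Ha : is_lim_seq (fun j => INR (a j) / (INR (S j) + INR h) ^ 2) 0.

Let c := (1 - q) / q.
Let z (j : nat) := gen_param q (S j).
Let w (j : nat) := gen_param q (j + S h).

Lemma odds_pos : 0 < c.
Proof. apply Rdiv_lt_0_compat; lra. Qed.

Lemma INR_S_ge_1 j : 1 <= INR (S j).
Proof. rewrite S_INR. pose proof (pos_INR j). lra. Qed.

Lemma shifted_param_eq j : w j = (INR (S j) + INR h) * c / (1 + (INR (S j) + INR h) * c).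
Proof. unfold w, gen_param. fold c. rewrite plus_INR, !S_INR. do 2 f_equal; ring. Qed.

Lemma param_bounds j : 0 < z j < 1.
Proof.
  pose proof odds_pos. pose proof (INR_S_ge_1 j). unfold z, gen_param. fold c.
  assert (0 < INR (S j) * c) by nra. split; [apply Rdiv_lt_0_compat; lra|].
  apply (Rmult_lt_reg_r (1 + INR (S j) * c)); [lra|].
  unfold Rdiv. rewrite Rmult_assoc, Rinv_l; lra.
Qed.

Lemma shifted_param_pos j : 0 < w j.
Proof.
  pose proof odds_pos. pose proof (INR_S_ge_1 j). pose proof (pos_INR h). rewrite shifted_param_eq.
  apply Rdiv_lt_0_compat; nra.
Qed.

Lemma inv_affine_lim : is_lim_seq (fun j => / (1 + INR (S j) * c)) 0.
Proof.
  pose proof odds_pos. apply (squeeze0 _ (fun j => / INR (S j)) (/ c)).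
  - intros j. pose proof (INR_S_ge_1 j). split; [left; apply Rinv_0_lt_compat; nra|].
    rewrite <- Rinv_mult. apply Rinv_le_contravar; nra.
  - apply (is_lim_seq_incr_1 (fun n => / INR n)).
    replace (Finite 0) with (Rbar_inv p_infty) by reflexivity.
    apply is_lim_seq_inv; [apply is_lim_seq_INR | discriminate].
Qed.

Lemma param_lim : is_lim_seq z 1.
Proof.
  pose proof odds_pos.
  apply (is_lim_seq_ext (fun j => 1 - / (1 + INR (S j) * c))).
  { intros j. unfold z, gen_param. fold c. pose proof (INR_S_ge_1 j). field. nra. }
  replace (Finite 1) with (Finite (1 - 0)) by (f_equal; ring).
  apply is_lim_seq_minus'; [apply is_lim_seq_const | apply inv_affine_lim].
Qed.

Lemma spread_lim : is_lim_seq (fun j => INR (a j) * (1 - z j) ^ 2 / z j) 0.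
Proof.
  apply (squeeze0 _ (fun j => INR (a j) / (INR (S j) + INR h) ^ 2) ((1 + INR h) ^ 2 / c ^ 2));
    [|exact Ha]. intros j.
  unfold z, gen_param; fold c. apply spread_bound; [apply INR_S_ge_1 | apply pos_INR | apply odds_pos | apply pos_INR].
Qed.

Lemma weight_ratio_lim :
  is_lim_seq (fun j => (1 - z j) ^ 2 * z j ^ a j / ((1 - w j) ^ 2 * w j ^ a j)) 1.
Proof.
  pose proof odds_pos. pose proof (pos_INR h).
  assert (Hdef : forall j, 0 <= 1 - z j / w j <= 1 /\
            INR (a j) * (1 - z j / w j) <= INR h * (1 + INR h) / c * (INR (a j) / (INR (S j) + INR h) ^ 2)).
  { intros j. rewrite shifted_param_eq. unfold z, gen_param; fold c.
    apply deficit_bound; auto using INR_S_ge_1, pos_INR. }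
  (* (1 - z) / (1 - w) = 1 + h c / (1 + (j+1) c) *)
  apply (is_lim_seq_ext (fun j => (1 + INR h * c * / (1 + INR (S j) * c)) ^ 2 * (z j / w j) ^ a j)).
  - intros j. pose proof (INR_S_ge_1 j). pose proof (param_bounds j). pose proof (shifted_param_pos j).
    assert (w j < 1) by (rewrite shifted_param_eq; apply (Rmult_lt_reg_r (1 + (INR (S j) + INR h) * c)); [nra|];
                         unfold Rdiv; rewrite Rmult_assoc, Rinv_l; nra).
    replace (1 + INR h * c * / (1 + INR (S j) * c)) with ((1 - z j) / (1 - w j)).
    + unfold Rdiv. rewrite !Rpow_mult_distr, !pow_inv.
      assert (w j ^ a j <> 0) by (apply pow_nonzero; lra).
      field. repeat split; lra.
    + rewrite shifted_param_eq. unfold z, gen_param. fold c. field. split; nra.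
  - replace (Finite 1) with (Finite ((1 + INR h * c * 0) ^ 2 * 1)) by (f_equal; ring).
    apply is_lim_seq_mult'.
    + apply (is_lim_seq_continuous (fun x => (1 + INR h * c * x) ^ 2)); [reg|].
      apply inv_affine_lim.
    + apply pow_to_one; [intros j; apply Hdef|].
      apply (squeeze0 _ (fun j => INR (a j) / (INR (S j) + INR h) ^ 2) (INR h * (1 + INR h) / c));
        [|exact Ha]. intros j. split; [|apply Hdef].
      apply Rmult_le_pos; [apply pos_INR | apply Hdef].
Qed.

Lemma conditioning_ratio_lim k :
  is_lim_seq (fun j => convpow k (lfrac (z j)) (S (a j)) / lfrac (w j) (S (a j))) (INR k).
Proof.
  set (Q := fun j => (1 - z j) ^ 2 * z j ^ a j / ((1 - w j) ^ 2 * w j ^ a j)).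
  set (E := fun j => INR (a j) * (1 - z j) ^ 2 / z j).
  apply (is_lim_seq_le_le (fun j => INR k * z j ^ k * Q j) _
                          (fun j => INR k * (1 + E j) ^ k * Q j)).
  - intros j. pose proof (param_bounds j). pose proof (shifted_param_pos j).
    assert (w j < 1) by (pose proof (gen_param_bounds q (j + S h) Hq); unfold w; lra).
    assert (Hden : 0 < (1 - w j) ^ 2 * w j ^ a j)
      by (apply Rmult_lt_0_compat; [apply pow_lt; lra | apply pow_lt; lra]).
    change (lfrac (w j) (S (a j))) with ((1 - w j) ^ 2 * w j ^ a j).
    unfold Q, Rdiv. rewrite <- !Rmult_assoc.
    split; apply Rmult_le_compat_r; try (left; apply Rinv_0_lt_compat; auto).
    + rewrite Rmult_assoc. apply convpow_lfrac_lower; auto.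
    + rewrite Rmult_assoc. apply convpow_lfrac_upper; auto.
  - replace (Finite (INR k)) with (Finite (INR k * 1 ^ k * 1)) by (f_equal; rewrite pow1; ring).
    apply is_lim_seq_mult'; [|apply weight_ratio_lim].
    apply (is_lim_seq_continuous (fun x => INR k * x ^ k)); [reg | apply param_lim].
  - replace (Finite (INR k)) with (Finite (INR k * (1 + 0) ^ k * 1)) by (f_equal; rewrite Rplus_0_r, pow1; ring).
    apply is_lim_seq_mult'; [|apply weight_ratio_lim].
    apply (is_lim_seq_continuous (fun x => INR k * (1 + x) ^ k)); [reg | apply spread_lim].
Qed.

End ConditioningRatio.

(** * Kesten's tree for a critical offspring law *)

Lemma spine_sum_gen h (ks gw : ptree -> R) l : (forall c, ks c = INR (gen h c) * gw c) ->
  spine_sum ks gw l = INR (fold_right Nat.add 0%nat (map (gen h) l)) * Rprod (map gw l).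
Proof.
  intros H. induction l as [|c l IH]; simpl; [ring|].
  rewrite IH, H, plus_INR. ring.
Qed.

Lemma kesten_law_size_biased p : mean p = 1 -> forall h t,
  kesten_law p h t = INR (gen h t) * gw_law p h t.
Proof.
  intros Hm h. induction h; intros [l]; [simpl; ring|].
  simpl kesten_law. rewrite (spine_sum_gen h) by auto. unfold pstar. rewrite Hm.
  simpl gw_law. change (gen (S h) (Node l)) with (fold_right Nat.add 0%nat (map (gen h) l)).
  destruct l as [|c l']; [simpl; ring|].
  assert (INR (length (c :: l')) <> 0) by (apply not_0_INR; simpl; lia).
  field; auto.
Qed.

Lemma lin_geom_lim y : 0 < y < 1 -> is_lim_seq (fun N => INR N * y ^ N) 0.
Proof.
  intros Hy. apply is_lim_seq_incr_1, is_lim_seq_abs_0, ex_series_lim_0.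
  (* the series sum (N+1) y^(N+1) converges by d'Alembert's ratio test *)
  apply (ex_series_DAlembert _ y); [lra | |].
  - intros n. apply Rmult_integral_contrapositive. split; [apply not_0_INR; lia | apply pow_nonzero; lra].
  - apply (is_lim_seq_ext (fun n => (1 + / INR (S n)) * y)).
    + intros n. assert (Hpos : forall m, 0 < INR (S m) * y ^ S m).
      { intros m. apply Rmult_lt_0_compat; [apply lt_0_INR; lia | apply pow_lt; lra]. }
      rewrite Rabs_right by (apply Rle_ge; left; apply Rdiv_lt_0_compat; apply Hpos).
      rewrite !S_INR. pose proof (pos_INR n). simpl pow.
      field. split; [apply pow_nonzero|]; lra.
    + replace (Finite y) with (Finite ((1 + 0) * y)) by (f_equal; ring).
      apply is_lim_seq_mult'; [|apply is_lim_seq_const].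
      apply is_lim_seq_plus'; [apply is_lim_seq_const|].
      apply (is_lim_seq_incr_1 (fun n => / INR n)).
      replace (Finite 0) with (Rbar_inv p_infty) by reflexivity.
      apply is_lim_seq_inv; [apply is_lim_seq_INR | discriminate].
Qed.

Lemma mean_geom_offspring q : 0 < q < 1 -> mean (geom_offspring q) = 1.
Proof.
  intros Hq. unfold mean. apply has_sum_tsum.
  assert (Hnn : nonneg (fun k => INR k * geom_offspring q k)).
  { intros k. apply Rmult_le_pos; [apply pos_INR | apply geom_offspring_nonneg; auto]. }
  apply (has_sum_partition _ _ (fun k => k) (fun k => INR k * geom_offspring q k)); auto.
  - intros K. apply (has_sum_single _ (fun k => INR k * geom_offspring q k) K); auto.
    intros x; tauto.
  -
    apply (is_lim_seq_ext (fun N => 1 - (1 - q) ^ N - q * (INR N * (1 - q) ^ N))).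
    + intros N. induction N; [simpl; ring|].
      rewrite tech5, <- IHN, S_INR. simpl. ring.
    + replace (Finite 1) with (Finite (1 - 0 - q * 0)) by (f_equal; ring).
      apply is_lim_seq_minus'; [apply is_lim_seq_minus'; [apply is_lim_seq_const|]|].
      * apply is_lim_seq_geom. rewrite Rabs_right; lra.
      * apply is_lim_seq_mult'; [apply is_lim_seq_const | apply lin_geom_lim; lra].
Qed.

Lemma geom_restr_gen_law q : 0 < q < 1 -> forall h j t a,
  has_sum (fun s => restr h s = t /\ gen (h + j) s = a) (gw_law (geom_offspring q) (h + j))
          (gw_law (geom_offspring q) h t * convpow (gen h t) (lfrac (gen_param q j)) a).
Proof.
  intros Hq. apply restr_gen_law; [apply geom_offspring_nonneg | apply geom_gen_law]; auto.
Qed.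

Lemma shifted_level_lim (alpha : nat -> nat) h :
  is_lim_seq (fun n => INR (alpha n) / INR n ^ 2) 0 ->
  is_lim_seq (fun j => INR (pred (alpha (j + S h)%nat)) / (INR (S j) + INR h) ^ 2) 0.
Proof.
  intros Hal. apply (is_lim_seq_incr_n _ (S h)) in Hal.
  apply (squeeze0 _ (fun n => INR (alpha (n + S h)%nat) / INR (n + S h) ^ 2) 1); [|exact Hal].
  intros j.
  replace (INR (S j) + INR h) with (INR (j + S h)) by (rewrite plus_INR, !S_INR; ring).
  assert (0 < INR (j + S h) ^ 2) by (apply pow_lt, lt_0_INR; lia).
  assert (INR (pred (alpha (j + S h)%nat)) <= INR (alpha (j + S h)%nat)) by (apply le_INR; lia).
  assert (0 < / INR (j + S h) ^ 2) by (apply Rinv_0_lt_compat; auto).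
  unfold Rdiv. rewrite Rmult_1_l.
  split; [apply Rmult_le_pos; [apply pos_INR | lra] | apply Rmult_le_compat_r; lra].
Qed.

Theorem corollary6p2 (q : R) (hq : 0 < q < 1) (alpha : nat -> nat)
  (halpha_pos : forall n, (0 < alpha n)%nat)
  (halpha : Un_cv (fun n => INR (alpha n) / INR n ^ 2) 0) :
  forall (h : nat) (t : ptree),
    Un_cv (fun n => gw_cond_law (geom_offspring q) n (alpha n) h t)
          (kesten_law (geom_offspring q) h t).
Proof.
  intros h t. apply is_lim_seq_Reals in halpha. apply is_lim_seq_Reals.
  rewrite (kesten_law_size_biased _ (mean_geom_offspring q hq)).
  (* only the tail n = j + h + 1 matters; there n - h = j + 1 and alpha n = a_j + 1 *)
  apply (is_lim_seq_incr_n _ (S h)).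
  set (a := fun j => pred (alpha (j + S h)%nat)).
  assert (Ha : forall j, alpha (j + S h)%nat = S (a j)).
  { intros j. specialize (halpha_pos (j + S h)%nat). unfold a; lia. }
  apply (is_lim_seq_ext (fun j => gw_law (geom_offspring q) h t *
     (convpow (gen h t) (lfrac (gen_param q (S j))) (S (a j)) / lfrac (gen_param q (j + S h)) (S (a j))))).
  - (* the conditional probability is P(r_h = t) times the conditioning ratio *)
    intros j. unfold gw_cond_law. rewrite Ha.
    replace (Nat.max (j + S h) h) with (h + S j)%nat by lia.
    replace (j + S h)%nat with (h + S j)%nat by lia.
    rewrite (has_sum_tsum _ _ _ (geom_restr_gen_law q hq h (S j) t (S (a j)))).
    rewrite (has_sum_tsum _ _ _ (geom_gen_law q hq (h + S j) (S (a j)))).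
    unfold Rdiv; ring.
  - (* and the conditioning ratio tends to G_h(t) *)
    replace (Finite (INR (gen h t) * gw_law (geom_offspring q) h t))
      with (Finite (gw_law (geom_offspring q) h t * INR (gen h t))) by (f_equal; ring).
    apply is_lim_seq_mult'; [apply is_lim_seq_const|].
    apply conditioning_ratio_lim; auto. apply shifted_level_lim; auto.
Qed.
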